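(* Let $\mathcal V$ be a finite set, $2\le k\le|\mathcal V|-2$, let $\Gamma\subset\binom{\mathcal V}{k}$ be a code and let $G\le{\rm Aut}(\Gamma)\cap{\rm Sym}(\mathcal V)$. (a) $\Gamma$ is $G$-strongly incidence-transitive if and only if $\Gamma$ is $G$-incidence-transitive and $\delta(\Gamma)\ge2$. (b) If $\delta(\Gamma)\ge3$ and $\Gamma$ is $G$-neighbour-transitive, then $\Gamma$ is $G$-strongly incidence-transitive. (c) If $G$ is primitive on $\mathcal V$ and $\Gamma$ is $G$-strongly incidence-transitive, then $G$ is $2$-transitive on $\mathcal V$.
   Context: The Johnson graph $J(v,k)$ ($v=|\mathcal V|$) has vertex set $\binom{\mathcal V}{k}$, the $k$-subsets of $\mathcal V$, two being adjacent iff they meet in $k-1$ points; $d$ denotes graph distance. A code is a proper non-empty subset $\Gamma\subset\binom{\mathcal V}{k}$; $\delta(\Gamma)$ is the least distance in $J(v,k)$ between distinct codewords. The neighbour set $\Gamma_1$ is the set of $k$-subsets not in $\Gamma$ at distance $1$ from some codeword. ${\rm Aut}(\Gamma)$ is the setwise stabiliser of $\Gamma$ in ${\rm Aut}(J(v,k))$. For $\alpha\subseteq\mathcal V$, $\overline\alpha=\mathcal V\setminus\alpha$. For $G\le{\rm Aut}(\Gamma)$: $\Gamma$ is $G$-neighbour-transitive if $G$ is transitive on both $\Gamma$ and $\Gamma_1$; $\Gamma$ is $G$-incidence-transitive if $G$ is transitive on the set of pairs $(\gamma,\gamma_1)\in\Gamma\times\Gamma_1$ with $d(\gamma,\gamma_1)=1$.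 For $G\le{\rm Aut}(\Gamma)\cap{\rm Sym}(\mathcal V)$, $\Gamma$ is $G$-strongly incidence-transitive if $G$ is transitive on $\Gamma$ and, for $\gamma\in\Gamma$, the stabiliser $G_\gamma$ is transitive on $\gamma\times\overline\gamma$. *)

From mathcomp Require Import all_boot all_order all_fingroup all_solvable.
Set Implicit Arguments. Unset Strict Implicit. Unset Printing Implicit Defensive.

Section Johnson.
Variables (V : finType) (k : nat).

Definition ksubsets : {set {set V}} := [set A : {set V} | #|A| == k].

Definition jadj (A B : {set V}) : bool :=
  [&& #|A| == k, #|B| == k & #|A :&: B| == k.-1].

(* jwithin n A B  <=>  d(A,B) <= n in the graph J(v,k) (walks of length <= n) *)
Fixpoint jwithin (n : nat) (A B : {set V}) : bool :=
  if n is m.+1 then (A == B) || [exists C, jadj A C && jwithin m C B]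
  else A == B.

Definition is_code (Gam : {set {set V}}) : Prop :=
  Gam != set0 /\ Gam \proper ksubsets.

(* delta(Gam) >= m : distinct codewords are at distance >= m
   (vacuous, i.e. delta = infinity, when |Gam| = 1) *)
Definition min_dist_ge (Gam : {set {set V}}) (m : nat) : Prop :=
  forall A B, A \in Gam -> B \in Gam -> A != B -> ~~ jwithin m.-1 A B.

Definition neighbours (Gam : {set {set V}}) : {set {set V}} :=
  [set B in ksubsets | (B \notin Gam) && [exists A in Gam, jadj A B]].

Definition pim (g : {perm V}) (A : {set V}) : {set V} := [set g x | x in A].

Definition stabilises (G : {group {perm V}}) (Gam : {set {set V}}) : Prop :=
  forall g, g \in G -> [set pim g A | A : {set V} in Gam] = Gam.

Definition set_transitive (G : {group {perm V}}) (S : {set {set V}}) : Prop :=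
  forall A B, A \in S -> B \in S -> exists2 g, g \in G & pim g A = B.

Definition neighbour_transitive (G : {group {perm V}}) (Gam : {set {set V}}) : Prop :=
  set_transitive G Gam /\ set_transitive G (neighbours Gam).

Definition incidence_transitive (G : {group {perm V}}) (Gam : {set {set V}}) : Prop :=
  forall A A1 B B1,
    A \in Gam -> A1 \in neighbours Gam -> jadj A A1 ->
    B \in Gam -> B1 \in neighbours Gam -> jadj B B1 ->
    exists2 g, g \in G &
      pim g A = B /\ pim g A1 = B1.

Definition strongly_incidence_transitive (G : {group {perm V}}) (Gam : {set {set V}}) : Prop :=
  set_transitive G Gam /\
  forall A, A \in Gam ->
    forall x x' y y', x \in A -> x' \in A -> y \in ~: A -> y' \in ~: A ->
      exists2 g, g \in G &
        [/\ pim g A = A, g x = x' & g y = y'].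

End Johnson.

From mathcomp Require Import all_boot all_order all_fingroup all_solvable.
From mathcomp Require Import zify.
Set Implicit Arguments. Unset Strict Implicit. Unset Printing Implicit Defensive.

(* Two k-subsets are adjacent in J(v,k) exactly when one is the exchange
   A - x + y of the other with x in A and y outside A; so an incident pair
   (gamma, gamma_1) amounts to a codeword together with a point inside and a
   point outside it, provided every exchange of a codeword is a non-codeword,
   i.e. delta >= 2.  Conversely, if two codewords are adjacent, strong
   incidence-transitivity makes the code closed under all exchanges, hence
   equal to all k-subsets.  When delta >= 3 a neighbour is adjacent to only
   one codeword, so an element of G mapping a neighbour of gamma to another
   neighbour of gamma stabilises gamma.  Finally, G permutes the sets Gamma(x)
   of codewords through x, so the fibres of x |-> Gamma(x) form a G-invariant
   partition; primitivity makes this map injective, any two points are then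
   separated by a codeword, and strong incidence-transitivity moves any
   ordered pair of distinct points to any other. *)

Section PermImage.
Variable V : finType.
Implicit Types (A B : {set V}) (g h : {perm V}) (z : V).

Lemma mem_pim g A z : (z \in pim g A) = ((g^-1)%g z \in A).
Proof. by rewrite -{1}(permKV g z) /pim mem_imset //; apply: perm_inj. Qed.

Lemma mem_pim_f g A z : (g z \in pim g A) = (z \in A).
Proof. by rewrite mem_pim permK. Qed.

Lemma card_pim g A : #|pim g A| = #|A|.
Proof. by rewrite /pim card_imset //; apply: perm_inj. Qed.

Lemma pimM g h A : pim (g * h)%g A = pim h (pim g A).
Proof. by apply/setP=> z; rewrite !mem_pim invMg permM. Qed.

Lemma pimI g A B : pim g (A :&: B) = pim g A :&: pim g B.
Proof. by apply/setP=> z; rewrite !(inE, mem_pim). Qed.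

Lemma pimK g : cancel (pim g) (pim (g^-1)%g).
Proof. by move=> A; apply/setP=> z; rewrite !mem_pim invgK permK. Qed.

Lemma pimKV g : cancel (pim (g^-1)%g) (pim g).
Proof. by move=> A; apply/setP=> z; rewrite !mem_pim invgK permKV. Qed.

Lemma pim_inj g : injective (pim g).
Proof. exact: can_inj (pimK g). Qed.

Lemma jadj_pim k g A B : jadj k (pim g A) (pim g B) = jadj k A B.
Proof. by rewrite /jadj -pimI !card_pim. Qed.

End PermImage.

Section Exchange.
Variable V : finType.
Implicit Types (A B C : {set V}) (g : {perm V}) (x y z : V).

Definition exch A x y := y |: (A :\ x).

Lemma mem_exch A x y z : (z \in exch A x y) = (z == y) || (z != x) && (z \in A).
Proof. by rewrite !inE. Qed.

Lemma pim_exch g A x y : pim g (exch A x y) = exch (pim g A) (g x) (g y).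
Proof.
apply/setP=> z; rewrite !(mem_exch, mem_pim).
by rewrite -!(can2_eq (permKV g) (permK g)).
Qed.

Lemma card_exch A x y : x \in A -> y \notin A -> #|exch A x y| = #|A|.
Proof.
move=> xA yA; rewrite cardsU1 (cardsD1 x A) xA !inE.
by rewrite (negbTE yA) andbF.
Qed.

Lemma exch_neq A x y : y \notin A -> exch A x y != A.
Proof. by move=> yA; apply: contraNneq yA => <-; rewrite mem_exch eqxx. Qed.

Lemma jadj_exch k A x y : #|A| = k -> x \in A -> y \notin A -> jadj k A (exch A x y).
Proof.
move=> cA xA yA; rewrite /jadj card_exch // cA eqxx /=.
have -> : A :&: exch A x y = A :\ x.
  apply/setP=> z; rewrite !inE; case: eqVneq => [->|_] /=; first by rewrite (negbTE yA) andbF.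
  by rewrite andbCA andbb.
by apply/eqP; have := cardsD1 x A; rewrite xA cA; lia.
Qed.

Lemma jadj_sym k A B : jadj k A B = jadj k B A.
Proof. by rewrite /jadj setIC andbCA. Qed.

Lemma jadjP k A B : 0 < k -> jadj k A B ->
  exists x y, [/\ x \in A, y \notin A & B = exch A x y].
Proof.
move=> k_gt0 /and3P[/eqP cA /eqP cB /eqP cI].
have /cards1P[x ABx] : #|A :\: B| == 1 by rewrite cardsD cA cI; apply/eqP; lia.
have /cards1P[y BAy] : #|B :\: A| == 1 by rewrite cardsD cB setIC cI; apply/eqP; lia.
have inABx z : (z \in A) && (z \notin B) = (z == x) by rewrite -in_set1 -ABx inE andbC.
have inBAy z : (z \in B) && (z \notin A) = (z == y) by rewrite -in_set1 -BAy inE andbC.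
have /andP[xA _] := eqbLR (esym (inABx x)) (eqxx x).
have /andP[_ yA] := eqbLR (esym (inBAy y)) (eqxx y).
exists x, y; split => //; apply/setP=> z; rewrite mem_exch.
move: (inABx z) (inBAy z).
by case: (z \in A); case: (z \in B); case: (z == y); case: (z == x).
Qed.

Lemma pim_exchP g A A' x y x' y' :
  x \in A -> y \notin A -> x' \in A' -> y' \notin A' ->
  pim g A = A' -> pim g (exch A x y) = exch A' x' y' -> g x = x' /\ g y = y'.
Proof.
move=> xA yA xA' yA' gA gAxy; split.
  have x'A' : x' \notin exch A' x' y'.
    by rewrite mem_exch eqxx orbF; apply: contraNneq yA' => <-.
  move: x'A'; rewrite -gAxy mem_pim mem_exch -mem_pim gA xA' andbT.
  by rewrite negb_or negbK => /andP[_ /eqP <-]; rewrite permKV.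
have : g y \in exch A' x' y' by rewrite -gAxy mem_pim_f mem_exch eqxx.
by rewrite mem_exch -gA mem_pim_f (negbTE yA) andbF orbF => /eqP.
Qed.

Lemma exch_closed_card (F : {set {set V}}) A C :
  A \in F -> (forall B x y, B \in F -> x \in B -> y \notin B -> exch B x y \in F) ->
  #|C| = #|A| -> C \in F.
Proof.
move=> AF exchF cC; have [n] := ubnP #|C :\: A|.
elim: n A AF cC => [|n IHn] A AF cC //; rewrite ltnS => CAn.
have [sCA|/subsetPn[y yC yA]] := boolP (C \subset A).
  by have /eqP-> : C == A by rewrite eqEcard sCA cC /=.
have /card_gt0P[x] : 0 < #|A :\: C|.
  have : 0 < #|C :\: A| by apply/card_gt0P; exists y; rewrite inE yA.
  by rewrite cardsD [in X in _ -> X]cardsD setIC cC.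
rewrite inE => /andP[xC xA].
apply: (IHn (exch A x y)); rewrite ?exchF ?card_exch //.
suff : C :\: exch A x y \proper C :\: A by move/proper_card; lia.
rewrite properE; apply/andP; split.
  apply/subsetP=> z; rewrite !in_setD mem_exch negb_or negb_and negbK.
  by case/andP=> /andP[_ /orP[/eqP->|->]] //; rewrite (negbTE xC).
by apply/subsetPn; exists y; rewrite !inE ?eqxx ?yA ?yC.
Qed.

End Exchange.

Section JohnsonDistance.
Variables (V : finType) (k : nat).
Implicit Types (A B C : {set V}) (Gam : {set {set V}}).

Lemma jwithinS n A B : jwithin k n A B -> jwithin k n.+1 A B.
Proof.
elim: n A => [|n IHn] A /=; first by move->.
case/orP=> [->//|/existsP[C /andP[AC CB]]].
by apply/orP; right; apply/existsP; exists C; rewrite AC; apply: IHn.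
Qed.

Lemma jadj_jwithin1 A B : jadj k A B -> jwithin k 1 A B.
Proof. by move=> AB /=; apply/orP; right; apply/existsP; exists B; rewrite AB eqxx. Qed.

Lemma jadj_jwithin2 A B C : jadj k A B -> jadj k B C -> jwithin k 2 A C.
Proof.
move=> AB BC /=; apply/orP; right; apply/existsP; exists B; rewrite AB /=.
exact: jadj_jwithin1.
Qed.

Lemma min_dist_geW Gam m : min_dist_ge k Gam m.+1 -> min_dist_ge k Gam m.
Proof.
by case: m => [|m] dGam A B AG BG AB //; apply: contra (dGam A B AG BG AB); apply: jwithinS.
Qed.

End JohnsonDistance.

Section PrimitivePerm.
Variables (T : finType) (G : {group {perm T}}).
Hypothesis prim : [primitive G, on [set: T] | 'P].
Open Scope group_scope.

Lemma primitive_fibres (rT : eqType) (f : T -> rT) :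
  (forall g x y, g \in G -> f x = f y -> f (g x) = f (g y)) ->
  injective f \/ (forall x y, f x = f y).
Proof.
move=> f_inv; have trG : [transitive G, on [set: T] | 'P] by case/andP: prim.
have [a _ | T0] := pickP (@predT T); last by left=> x; have := T0 x.
pose X := [set y | f y == f a].
have XN g : g \in G -> f (g a) = f a -> g \in 'N_G(X | 'P).
  move=> gG gaX; rewrite inE gG; apply/astabsP=> y; rewrite !inE /= apermE -{1}gaX.
  apply/eqP/eqP=> [/(f_inv _ _ _ (groupVr gG))|/(f_inv _ _ _ gG)//].
  by rewrite !permK.
have CN : 'C_G[a | 'P] \subset 'N_G(X | 'P).
  by apply/subsetP=> g /setIP[gG /astab1P]; rewrite /= apermE => ga; rewrite XN ?ga.
move: prim; rewrite (trans_prim_astab (in_setT a) trG) => /maximal_eqP[_].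
case/(_ _ CN (subsetIl _ _)) => defN.
  left=> x y fxy; have [g gG xg] := atransP2 trG (in_setT x) (in_setT a).
  have [h hG yh] := atransP2 trG (in_setT a) (in_setT (g y)).
  rewrite /= !apermE in xg yh; have /(f_inv g _ _ gG) := fxy; rewrite -xg yh => fah.
  have : h \in 'N_G(X | 'P) by rewrite XN // fah.
  rewrite defN => /setIP[_ /astab1P]; rewrite /= apermE -yh xg.
  by move/perm_inj.
right=> x y; suff fX z : f z = f a by rewrite !fX.
have [g gG ->] := atransP2 trG (in_setT a) (in_setT z).
have : g \in 'N_G(X | 'P) by rewrite defN.
by case/setIP=> _ /astabsP/(_ a); rewrite !inE eqxx => /eqP.
Qed.

End PrimitivePerm.

Lemma two_transitive_perm (T : finType) (G : {group {perm T}}) a b : a != b ->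
  (forall c d, c != d -> exists2 g, g \in G & g a = c /\ g b = d) ->
  [transitive^2 G, on [set: T] | 'P].
Proof.
move=> ab Gab; have ab_on : [tuple a; b] \in 2.-dtuple([set: T]).
  by rewrite inE /= inE ab; apply/subsetP=> z; rewrite inE.
apply/imsetP; exists [tuple a; b] => //; apply/setP=> t; apply/idP/idP.
  case/tupleP: t => c t; case/tupleP: t => d t; rewrite (tuple0 t).
  rewrite inE /= inE andbT => /andP[cd _]; have [g gG [ac bd]] := Gab c d cd.
  by apply/imsetP; exists g => //; apply: val_inj; rewrite /= !apermE ac bd.
case/imsetP=> g gG ->; apply: n_act_dtuple ab_on.
by apply/astabsP=> x; rewrite !inE.
Qed.

Section Code.
Variables (V : finType) (k : nat) (Gam : {set {set V}}) (G : {group {perm V}}).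
Hypotheses (k_gt0 : 0 < k) (k_ltV : k < #|V|).
Hypotheses (Gam_code : is_code k Gam) (G_Gam : stabilises G Gam).
Implicit Types (A B C : {set V}) (g : {perm V}) (x y : V).

Local Notation sit := (strongly_incidence_transitive G Gam).

Lemma codeword_card A : A \in Gam -> #|A| = k.
Proof.
case: Gam_code => _ /proper_sub/subsetP sGamK /sGamK.
by rewrite inE => /eqP.
Qed.

Lemma pim_codeword g A : g \in G -> (pim g A \in Gam) = (A \in Gam).
Proof. by move=> gG; rewrite -{1}(G_Gam gG) mem_imset //; apply: pim_inj. Qed.

Lemma codeword_in_out A : A \in Gam -> exists x y, x \in A /\ y \notin A.
Proof.
move/codeword_card=> cA.
have /card_gt0P[x xA] : 0 < #|A| by rewrite cA.
have /card_gt0P[y] : 0 < #|~: A| by rewrite cardsCs setCK cA subn_gt0.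
by rewrite inE => yA; exists x, y.
Qed.

Lemma exch_neighbour A x y : min_dist_ge k Gam 2 ->
  A \in Gam -> x \in A -> y \notin A -> exch A x y \in neighbours k Gam.
Proof.
move=> dGam AG xA yA; have A_Axy := jadj_exch (codeword_card AG) xA yA.
rewrite !inE card_exch // codeword_card // eqxx /=; apply/andP; split; last first.
  by apply/existsP; exists A; rewrite AG.
apply: contraT; rewrite negbK => AxyG.
have AAxy : A != exch A x y by rewrite eq_sym exch_neq.
by have /negP[] := dGam _ _ AG AxyG AAxy; apply: jadj_jwithin1.
Qed.

Lemma code_not_exch_closed :
  ~ (forall A x y, A \in Gam -> x \in A -> y \notin A -> exch A x y \in Gam).
Proof.
move=> exchG; case: Gam_code => /set0Pn[A AG] /properP[_ [C CK CG]].
case/negP: CG; apply: (exch_closed_card AG exchG).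
by move: CK; rewrite inE (codeword_card AG) => /eqP.
Qed.

Lemma sit_transport A A' x y x' y' : sit -> A \in Gam -> A' \in Gam ->
  x \in A -> y \notin A -> x' \in A' -> y' \notin A' ->
  exists2 g, g \in G & [/\ pim g A = A', g x = x' & g y = y'].
Proof.
case=> trG stabT AG A'G xA yA xA' yA'.
have [h hG hA] := trG _ _ AG A'G.
have hxA' : h x \in A' by rewrite -hA mem_pim_f.
have hyA' : h y \in ~: A' by rewrite inE -hA mem_pim_f.
have y'A' : y' \in ~: A' by rewrite inE.
have [g gG [gA' gx gy]] := stabT _ A'G _ x' _ y' hxA' xA' hyA' y'A'.
by exists (h * g)%g; rewrite ?groupM // pimM hA gA' !permM gx gy.
Qed.

Lemma sit_incidence_transitive : sit -> incidence_transitive k G Gam.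
Proof.
move=> sitG A A1 B B1 AG _ /(jadjP k_gt0)[x [y [xA yA ->]]].
move=> BG _ /(jadjP k_gt0)[x' [y' [xB yB ->]]].
have [g gG [gA gx gy]] := sit_transport sitG AG BG xA yA xB yB.
by exists g; rewrite // pim_exch gA gx gy.
Qed.

(* A codeword adjacent to a codeword can be transported onto every incident
   pair, which would close Gam under exchanges. *)
Lemma sit_min_dist_ge2 : sit -> min_dist_ge k Gam 2.
Proof.
move=> sitG A B AG BG AB; apply/negP=> /orP[/eqP AeB|/existsP[C /andP[A_B /eqP CB]]].
  by rewrite AeB eqxx in AB.
subst C.
have [x [y [xA yA defB]]] := jadjP k_gt0 A_B.
apply: code_not_exch_closed => A' x' y' A'G xA' yA'.
have [g gG [gA gx gy]] := sit_transport sitG AG A'G xA yA xA' yA'.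
by rewrite -gA -gx -gy -pim_exch -defB pim_codeword.
Qed.

Lemma incidence_transitive_sit :
  incidence_transitive k G Gam -> min_dist_ge k Gam 2 -> sit.
Proof.
move=> itG dGam; have incident A x y (AG : A \in Gam) xA yA :=
  (exch_neighbour (x := x) (y := y) dGam AG xA yA, jadj_exch (codeword_card AG) xA yA).
split=> [A B AG BG | A AG x x' y y' xA xA' yA yA'].
  have [x [y [xA yA]]] := codeword_in_out AG.
  have [x' [y' [xB yB]]] := codeword_in_out BG.
  have [[NA AA] [NB BB]] := (incident A x y AG xA yA, incident B x' y' BG xB yB).
  by have [g gG [gA _]] := itG _ _ _ _ AG NA AA BG NB BB; exists g.
rewrite !inE in yA yA'.
have [[NA AA] [NA' AA']] := (incident A x y AG xA yA, incident A x' y' AG xA' yA').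
have [g gG [gA gAxy]] := itG _ _ _ _ AG NA AA AG NA' AA'.
by have [gx gy] := pim_exchP xA yA xA' yA' gA gAxy; exists g.
Qed.

(* With delta >= 3 the codeword adjacent to a neighbour is unique, so g fixes A. *)
Lemma neighbour_transitive_sit :
  min_dist_ge k Gam 3 -> neighbour_transitive k G Gam -> sit.
Proof.
move=> dGam3 [trG trN]; have dGam2 := min_dist_geW dGam3.
split=> // A AG x x' y y' xA xA' yA yA'; rewrite !inE in yA yA'.
have [g gG gAxy] := trN _ _ (exch_neighbour dGam2 AG xA yA) (exch_neighbour dGam2 AG xA' yA').
have gA : pim g A = A.
  apply/eqP; apply: contraT; rewrite eq_sym => AgA.
  have /negP[] := dGam3 _ _ AG (etrans (pim_codeword A gG) AG) AgA.
  apply: (jadj_jwithin2 (jadj_exch (codeword_card AG) xA' yA')).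
  by rewrite jadj_sym -gAxy jadj_pim jadj_exch ?codeword_card.
by have [gx gy] := pim_exchP xA yA xA' yA' gA gAxy; exists g.
Qed.

Definition codewords_through x := [set C in Gam | x \in C].

Lemma codewords_through_perm g x : g \in G ->
  codewords_through (g x) = pim g @: codewords_through x.
Proof.
move=> gG; apply/setP=> C; rewrite -(pimKV g C) mem_imset; last exact: pim_inj.
by rewrite !inE pim_codeword // mem_pim_f.
Qed.

Lemma card_codewords_through : [transitive G, on [set: V] | 'P] ->
  forall x y, #|codewords_through x| = #|codewords_through y|.
Proof.
move=> trG x y; have [g gG ->] := atransP2 trG (in_setT x) (in_setT y).
by rewrite /= apermE codewords_through_perm // card_imset //; apply: pim_inj.
Qed.

Lemma codeword_separates : [primitive G, on [set: V] | 'P] ->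
  forall a b, a != b -> exists C, [/\ C \in Gam, a \in C & b \notin C].
Proof.
move=> primG a b ab; have trG : [transitive G, on [set: V] | 'P] by case/andP: primG.
have through_inv g x y : g \in G ->
    codewords_through x = codewords_through y -> codewords_through (g x) = codewords_through (g y).
  by move=> gG xy; rewrite !codewords_through_perm // xy.
have [inj_through|] := primitive_fibres primG through_inv.
  have [C aC bC] : exists2 C, C \in codewords_through a & C \notin codewords_through b.
    apply/subsetPn; apply: contra ab => sab; apply/eqP/inj_through/eqP.
    by rewrite eqEcard sab (card_codewords_through trG b a) leqnn.
  by move: aC bC; rewrite !inE => /andP[CG aC]; rewrite CG => bC; exists C.
case: Gam_code => /set0Pn[C CG] _; have [c [d [cC dC]]] := codeword_in_out CG.
by move/(_ c d)/setP/(_ C); rewrite !inE CG cC (negbTE dC).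
Qed.

Lemma sit_primitive_2transitive : [primitive G, on [set: V] | 'P] -> sit ->
  [transitive^2 G, on [set: V] | 'P].
Proof.
move=> primG sitG; case: Gam_code => /set0Pn[A AG] _.
have [a [b [aA bA]]] := codeword_in_out AG.
apply: (two_transitive_perm (a := a) (b := b)); first by apply: contraNneq bA => <-.
move=> c d cd; have [C [CG cC dC]] := codeword_separates primG cd.
by have [g gG [_ ga gb]] := sit_transport sitG AG CG aA bA cC dC; exists g.
Qed.

End Code.

Theorem theorem1p3 (V : finType) (k : nat) (Gam : {set {set V}})
    (G : {group {perm V}}) :
  2 <= k -> k + 2 <= #|V| ->
  is_code k Gam -> stabilises G Gam ->
  [/\ (strongly_incidence_transitive G Gam <->
         incidence_transitive k G Gam /\ min_dist_ge k Gam 2),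
      (min_dist_ge k Gam 3 -> neighbour_transitive k G Gam ->
         strongly_incidence_transitive G Gam)
    & ([primitive G, on [set: V] | 'P] -> strongly_incidence_transitive G Gam ->
         [transitive^2 G, on [set: V] | 'P])].
Proof.
move=> k_ge2 kV Gam_code G_Gam.
have k_gt0 : 0 < k by apply: leq_trans k_ge2.
have k_ltV : k < #|V| by apply: leq_trans kV; rewrite addn2.
split.
- split=> [sitG | [itG dGam]].
    split; first exact: sit_incidence_transitive k_gt0 sitG.
    exact: sit_min_dist_ge2 k_gt0 Gam_code G_Gam sitG.
  exact: incidence_transitive_sit k_gt0 k_ltV Gam_code itG dGam.
- exact: neighbour_transitive_sit Gam_code G_Gam.
exact: sit_primitive_2transitive k_gt0 k_ltV Gam_code G_Gam.
Qed.
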